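(* Let $\mathbf{x}\in\mathbb{R}^d$, $\mathbf{x}\neq 0$, and consider the training set $\{(\mathbf{x},1),(-\mathbf{x},-1)\}$. (1) Let $k$ be the FC-NTK kernel defined below, and $g_k$ its minimum norm interpolant on this training set. Then for all $\mathbf{z}\in\mathbb{R}^d$, $g_k(\mathbf{z})\ge 0$ if and only if $\mathbf{z}^T\mathbf{x}\ge 0$. (2) Let $K$ be the CNTK-GAP kernel defined below (with patch size $q$, $1\le q\le d$), and assume the $2\times 2$ Gram matrix $H_K$ of $K$ on $\{\mathbf{x},-\mathbf{x}\}$ is invertible. Then either for all $\mathbf{z}\in\mathbb{R}^d$ [$g_K(\mathbf{z})\ge 0$ iff $\mathbf{z}^T\mathbf{1}_d\ge 0$], or for all $\mathbf{z}\in\mathbb{R}^d$ [$g_K(\mathbf{z})\ge 0$ iff $\mathbf{z}^T\mathbf{1}_d\le 0$]; i.e., the hyperplane $\mathbf{z}^T\mathbf{1}_d=0$ is the decision boundary.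
   Context: FC-NTK (NTK of the bias-free two-layer ReLU network $\mathbf{v}^T\sigma(W\mathbf{x})$ with Gaussian initialization): for $\mathbf{z},\mathbf{x}\in\mathbb{R}^n$, $k(\mathbf{z},\mathbf{x})=\frac{1}{\pi}\left(2\mathbf{z}^T\mathbf{x}(\pi-\phi)+\|\mathbf{z}\|\|\mathbf{x}\|\sin\phi\right)$, where $\phi=\arccos\left(\frac{\mathbf{z}^T\mathbf{x}}{\|\mathbf{z}\|\|\mathbf{x}\|}\right)$ is the angle between $\mathbf{z}$ and $\mathbf{x}$ (with $k=0$ if either argument is $0$). CNTK-GAP (for the bias-free two-layer circular-convolution network with global average pooling, filter size $q$): for $\mathbf{z},\mathbf{x}\in\mathbb{R}^d$ let $\bar{\mathbf{z}}_i=(z_i,z_{(i+1)\bmod d},\dots,z_{(i+q-1)\bmod d})^T\in\mathbb{R}^q$ be the cyclic patches ($1\le i\le d$, indices interpreted cyclically in $\{1,\dots,d\}$), similarly $\bar{\mathbf{x}}_j$; then $K(\mathbf{z},\mathbf{x})=\frac{1}{d^2}\sum_{i=1}^d\sum_{j=1}^d k(\bar{\mathbf{z}}_i,\bar{\mathbf{x}}_j)$ with $k$ the FC-NTK on $\mathbb{R}^q$. For a kernel $k$ and training data $\{(\mathbf{x}_i,y_i)\}_{i=1}^n$ with invertible Gram matrix $H_k=(k(\mathbf{x}_i,\mathbf{x}_j))_{i,j}$, the minimum norm interpolant (limit $\lambda\to 0$ of kernel ridge regression) is $g_k(\mathbf{z})=(k(\mathbf{z},\mathbf{x}_1),\dots,k(\mathbf{z},\mathbf{x}_n))H_k^{-1}\mathbf{y}$,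 $\mathbf{y}=(y_1,\dots,y_n)^T$. $\mathbf{1}_d$ is the all-ones vector. *)

From mathcomp Require Import all_boot all_order all_algebra.
From mathcomp Require Import all_classical all_reals all_analysis.
Set Implicit Arguments. Unset Strict Implicit. Unset Printing Implicit Defensive.
Import Order.TTheory GRing.Theory Num.Theory.
Local Open Scope ring_scope.

Section Defs.
Variable R : realType.

Definition dotv (n : nat) (z x : 'rV[R]_n) : R := \sum_(i < n) z 0 i * x 0 i.
Definition normv (n : nat) (z : 'rV[R]_n) : R := Num.sqrt (dotv z z).

Definition angle (n : nat) (z x : 'rV[R]_n) : R :=
  acos (dotv z x / (normv z * normv x)).

(* FC-NTK of the bias-free two-layer ReLU network *)
Definition fc_ntk (n : nat) (z x : 'rV[R]_n) : R :=
  if (z == 0) || (x == 0) then 0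
  else pi^-1 * (2 * dotv z x * (pi - angle z x) + normv z * normv x * sin (angle z x)).

Lemma ord_pos (d : nat) (i : 'I_d) : (0 < d)%N.
Proof. exact: (leq_ltn_trans (leq0n i) (ltn_ord i)). Qed.

Definition cyc_idx (d : nat) (i : 'I_d) (j : nat) : 'I_d :=
  Ordinal (ltn_pmod (i + j) (ord_pos i)).

Definition patch (d q : nat) (z : 'rV[R]_d) (i : 'I_d) : 'rV[R]_q :=
  \row_(j < q) z 0 (cyc_idx i j).

Definition cntk_gap (d q : nat) (z x : 'rV[R]_d) : R :=
  (d%:R ^+ 2)^-1 * \sum_(i < d) \sum_(j < d) fc_ntk (patch q z i) (patch q x j).

Definition gram (n m : nat) (k : 'rV[R]_n -> 'rV[R]_n -> R) (X : 'I_m -> 'rV[R]_n)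
  : 'M[R]_m := \matrix_(i, j) k (X i) (X j).

Definition min_norm_interp (n m : nat) (k : 'rV[R]_n -> 'rV[R]_n -> R)
  (X : 'I_m -> 'rV[R]_n) (y : 'cV[R]_m) (z : 'rV[R]_n) : R :=
  ((\row_(i < m) k z (X i)) *m invmx (gram k X) *m y) 0 0.

Definition trainX (d : nat) (x : 'rV[R]_d) : 'I_2 -> 'rV[R]_d :=
  fun i => if val i == 0%N then x else - x.
Definition trainY : 'cV[R]_2 := \col_(i < 2) (if val i == 0%N then 1 else -1).

End Defs.

From Pilot Require Import Defs.
From mathcomp Require Import all_boot all_order all_algebra.
From mathcomp Require Import all_classical all_reals all_analysis.
From mathcomp Require Import ring lra.
Set Implicit Arguments. Unset Strict Implicit. Unset Printing Implicit Defensive.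
Import Order.TTheory GRing.Theory Num.Theory.
Local Open Scope ring_scope.

(* Both kernels are even, k(-u,-v) = k(u,v).  For an even kernel the label
   vector (1,-1) is an eigenvector of the Gram matrix on {x,-x}, with
   eigenvalue k(x,x) - k(x,-x), so the minimum norm interpolant is
   z |-> (k(z,x) - k(z,-x)) / (k(x,x) - k(x,-x)), the odd part of k(., x)
   up to a nonzero constant.  The odd part of the FC-NTK is 2 z.x (because
   acos(-t) = pi - acos t), and that of the CNTK-GAP is
   2q/d^2 (z.1)(x.1), since each coordinate occurs in exactly q patches. *)

Section EvenKernelInterpolant.
Variables (R : realType) (n : nat) (k : 'rV[R]_n -> 'rV[R]_n -> R).
Hypothesis k_even : forall u v, k (- u) (- v) = k u v.
Variable x : 'rV[R]_n.

Lemma gram_trainXE (i j : 'I_2) :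
  gram k (trainX x) i j = if i == j then k x x else k x (- x).
Proof.
rewrite mxE /trainX.
by case: i => [[|[|i]] Hi] //; case: j => [[|[|j]] Hj] //=;
  rewrite -[X in k _ X](opprK x) k_even.
Qed.

Lemma gram_trainY :
  gram k (trainX x) *m trainY R = (k x x - k x (- x)) *: trainY R.
Proof.
apply/colP => i; rewrite !mxE !big_ord_recl big_ord0 !gram_trainXE !mxE.
by case: i => [[|[|i]] Hi] //=; ring.
Qed.

Hypothesis gram_unit : gram k (trainX x) \in unitmx.

Lemma even_kernel_gap_neq0 : k x x - k x (- x) != 0.
Proof.
apply/eqP => gap0; have := mulKmx gram_unit (trainY R).
rewrite gram_trainY gap0 scale0r mulmx0 => /colP/(_ ord0).
by rewrite !mxE => /eqP; rewrite eq_sym oner_eq0.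
Qed.

Lemma min_norm_interp_even (z : 'rV[R]_n) :
  min_norm_interp k (trainX x) (trainY R) z
  = (k z x - k z (- x)) / (k x x - k x (- x)).
Proof.
have solE : invmx (gram k (trainX x)) *m trainY R
            = (k x x - k x (- x))^-1 *: trainY R.
  apply: (canLR (mulKmx gram_unit)).
  by rewrite -scalemxAr gram_trainY scalerA mulVf ?scale1r ?even_kernel_gap_neq0.
rewrite /min_norm_interp -mulmxA solE -scalemxAr !mxE !big_ord_recl big_ord0 !mxE.
by rewrite /trainX /= mulr1 mulrN1 addr0 mulrC.
Qed.

End EvenKernelInterpolant.

Section InnerProduct.
Variables (R : realType) (n : nat).
Implicit Types z x : 'rV[R]_n.

Lemma dotvNr z x : dotv z (- x) = - dotv z x.
Proof. by rewrite /dotv -sumrN; apply: eq_bigr => i _; rewrite mxE mulrN. Qed.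

Lemma dotvNl z x : dotv (- z) x = - dotv z x.
Proof. by rewrite /dotv -sumrN; apply: eq_bigr => i _; rewrite mxE mulNr. Qed.

Lemma dotv0r z : dotv z 0 = 0.
Proof. by rewrite /dotv big1 // => i _; rewrite mxE mulr0. Qed.

Lemma dotv0l x : dotv 0 x = 0.
Proof. by rewrite /dotv big1 // => i _; rewrite mxE mul0r. Qed.

Lemma dotvv_ge0 x : 0 <= dotv x x.
Proof. by apply: sumr_ge0 => i _; rewrite -expr2 sqr_ge0. Qed.

Lemma dotvv_gt0 x : x != 0 -> 0 < dotv x x.
Proof.
move=> x_neq0; rewrite lt_def dotvv_ge0 andbT; apply: contra x_neq0.
rewrite psumr_eq0 => [/allP x0|i _]; last by rewrite -expr2 sqr_ge0.
apply/eqP/rowP => i; rewrite mxE.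
by have /implyP/(_ isT) := x0 i (mem_index_enum i); rewrite mulf_eq0 orbb => /eqP.
Qed.

Lemma normvN x : normv (- x) = normv x.
Proof. by rewrite /normv dotvNl dotvNr opprK. Qed.

Lemma normv_gt0 x : x != 0 -> 0 < normv x.
Proof. by move=> /dotvv_gt0; rewrite sqrtr_gt0. Qed.

Lemma normv_sqr x : normv x ^+ 2 = dotv x x.
Proof. by rewrite sqr_sqrtr // dotvv_ge0. Qed.

Lemma dotv_CauchySchwarz z x : dotv z x ^+ 2 <= dotv z z * dotv x x.
Proof.
have [->|/dotvv_gt0 xx_gt0] := eqVneq x 0; first by rewrite !dotv0r expr0n mulr0.
have sqE (b c : R) : \sum_(i < n) (z 0 i * b - x 0 i * c) ^+ 2
    = b ^+ 2 * dotv z z - 2 * b * c * dotv z x + c ^+ 2 * dotv x x.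
  rewrite /dotv !mulr_sumr -sumrB -big_split /=.
  by apply: eq_bigr => i _; ring.
have : 0 <= dotv x x * (dotv x x * dotv z z - dotv z x ^+ 2).
  rewrite [X in _ <= X](_ : _ = \sum_(i < n)
    (z 0 i * dotv x x - x 0 i * dotv z x) ^+ 2); last by rewrite sqE; ring.
  by apply: sumr_ge0 => i _; apply: sqr_ge0.
by rewrite pmulr_rge0 // subr_ge0 mulrC.
Qed.

Lemma cosine_bounds z x : z != 0 -> x != 0 ->
  -1 <= dotv z x / (normv z * normv x) <= 1.
Proof.
move=> /normv_gt0 z_gt0 /normv_gt0 x_gt0; set t := _ / _.
suff : t ^+ 2 <= 1 by move=> ?; apply/andP; split; nra.
rewrite expr_div_n exprMn !normv_sqr ler_pdivrMr; last first.
  by rewrite -!normv_sqr mulr_gt0 ?exprn_gt0.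
by rewrite mul1r dotv_CauchySchwarz.
Qed.

End InnerProduct.

Section FcNtk.
Variables (R : realType) (n : nat).
Implicit Types u v : 'rV[R]_n.

Lemma fc_ntkNN u v : fc_ntk (- u) (- v) = fc_ntk u v.
Proof. by rewrite /fc_ntk /angle !oppr_eq0 dotvNl dotvNr opprK !normvN. Qed.

Lemma fc_ntk_odd u v : fc_ntk u v - fc_ntk u (- v) = 2 * dotv u v.
Proof.
rewrite /fc_ntk oppr_eq0.
have [->|u_neq0] := eqVneq u 0; first by rewrite dotv0l mulr0 subrr.
have [->|v_neq0] := eqVneq v 0; first by rewrite dotv0r mulr0 subrr.
rewrite /= /angle dotvNr normvN mulNr; set t := _ / _.
have t_bnd : -1 <= t <= 1 := cosine_bounds u_neq0 v_neq0.
have Nt_bnd : -1 <= - t <= 1 by move: t_bnd => /andP[? ?]; apply/andP; split; lra.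
rewrite !sin_acos // sqrrN acosN //.
have : pi != 0 :> R by rewrite gt_eqF // pi_gt0.
by move: (@pi R) => p p_neq0; field.
Qed.

Lemma fc_ntk_antipodal v : fc_ntk v (- v) = 0.
Proof.
rewrite /fc_ntk oppr_eq0 orbb; have [//|v_neq0] := eqVneq v 0.
rewrite /angle dotvNr normvN -expr2 normv_sqr mulNr divff ?gt_eqF ?dotvv_gt0 //.
by rewrite acosN1 subrr sinpi !mulr0 addr0 mulr0.
Qed.

Lemma gram_fc_ntk_trainX (x : 'rV[R]_n) :
  gram (@fc_ntk R n) (trainX x) = (2 * dotv x x)%:M.
Proof.
apply/matrixP => i j; rewrite gram_trainXE; last exact: fc_ntkNN.
rewrite fc_ntk_antipodal mxE -(fc_ntk_odd x x) fc_ntk_antipodal subr0.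
by case: (i == j); rewrite ?mulr1n ?mulr0n.
Qed.

Lemma min_norm_interp_fc_ntk (x z : 'rV[R]_n) : x != 0 ->
  min_norm_interp (@fc_ntk R n) (trainX x) (trainY R) z = dotv z x / dotv x x.
Proof.
move=> /dotvv_gt0 xx_gt0.
have gram_unit : gram (@fc_ntk R n) (trainX x) \in unitmx.
  by rewrite gram_fc_ntk_trainX unitmxE det_scalar unitfE expf_neq0 ?gt_eqF ?mulr_gt0.
rewrite min_norm_interp_even //; last exact: fc_ntkNN.
by rewrite !fc_ntk_odd invfM mulrACA divff ?mul1r.
Qed.

End FcNtk.

Section CntkGap.
Variables (R : realType) (d q : nat).
Implicit Types z x : 'rV[R]_d.

Lemma patchN x (i : 'I_d) : Defs.patch q (- x) i = - Defs.patch q x i.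
Proof. by apply/rowP => l; rewrite !mxE. Qed.

Lemma cntk_gapNN z x : cntk_gap q (- z) (- x) = cntk_gap q z x.
Proof.
rewrite /cntk_gap; congr (_ * _); apply: eq_bigr => i _; apply: eq_bigr => j _.
by rewrite !patchN fc_ntkNN.
Qed.

Lemma cyc_idx_inj (l : nat) : injective (fun i : 'I_d => cyc_idx i l).
Proof.
move=> i j /(congr1 val) /= /eqP; rewrite eqn_modDr !modn_small // => /eqP ij.
exact: val_inj.
Qed.

Lemma sum_cyc_idx (l : nat) (f : 'I_d -> R) :
  \sum_(i < d) f (cyc_idx i l) = \sum_(i < d) f i.
Proof. by rewrite [RHS](reindex_inj (@cyc_idx_inj l)). Qed.

Lemma sum_dotv_patch z x :
  \sum_(i < d) \sum_(j < d) dotv (Defs.patch q z i) (Defs.patch q x j)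
  = q%:R * (dotv z (const_mx 1) * dotv x (const_mx 1)).
Proof.
have sumE y : dotv y (const_mx 1) = \sum_(i < d) y 0 i.
  by apply: eq_bigr => i _; rewrite mxE mulr1.
rewrite !sumE /dotv; under eq_bigr => i _ do rewrite exchange_big /=.
rewrite exchange_big /= mulr_natl -[in RHS](card_ord q) -sumr_const.
apply: eq_bigr => l _; rewrite -(sum_cyc_idx l (z 0)) -(sum_cyc_idx l (x 0)) mulr_suml.
by apply: eq_bigr => i _; rewrite mulr_sumr; apply: eq_bigr => j _; rewrite !mxE.
Qed.

Lemma cntk_gap_odd z x :
  cntk_gap q z x - cntk_gap q z (- x)
  = 2 * q%:R / d%:R ^+ 2 * (dotv z (const_mx 1) * dotv x (const_mx 1)).
Proof.
rewrite /cntk_gap -mulrBr -sumrB.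
transitivity ((d%:R ^+ 2)^-1 * (2 *
    \sum_(i < d) \sum_(j < d) dotv (Defs.patch q z i) (Defs.patch q x j)));
  last by rewrite sum_dotv_patch; ring.
congr (_ * _); rewrite mulr_sumr; apply: eq_bigr => i _; rewrite -sumrB mulr_sumr.
by apply: eq_bigr => j _; rewrite patchN fc_ntk_odd.
Qed.

Lemma min_norm_interp_cntk_gap x :
  gram (@cntk_gap R d q) (trainX x) \in unitmx ->
  dotv x (const_mx 1) != 0 /\
  forall z, min_norm_interp (@cntk_gap R d q) (trainX x) (trainY R) z
            = dotv z (const_mx 1) / dotv x (const_mx 1).
Proof.
move=> gram_unit; have := even_kernel_gap_neq0 cntk_gapNN gram_unit.
rewrite cntk_gap_odd; set c := _ / _; set s := dotv x (const_mx 1).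
rewrite mulf_eq0 negb_or => /andP[c_neq0]; rewrite mulf_eq0 orbb => s_neq0.
split=> // z; rewrite min_norm_interp_even //; last exact: cntk_gapNN.
by rewrite !cntk_gap_odd -/c -/s; field; apply/andP.
Qed.

End CntkGap.

Theorem theorem2 (R : realType) (d : nat) (x : 'rV[R]_d) (hx : x != 0) :
  (forall z : 'rV[R]_d,
     0 <= min_norm_interp (@fc_ntk R d) (trainX x) (trainY R) z <-> 0 <= dotv z x)
  /\
  (forall q : nat, (1 <= q <= d)%N ->
     gram (@cntk_gap R d q) (trainX x) \in unitmx ->
     (forall z : 'rV[R]_d,
        0 <= min_norm_interp (@cntk_gap R d q) (trainX x) (trainY R) z
        <-> 0 <= dotv z (const_mx 1))
     \/
     (forall z : 'rV[R]_d,
        0 <= min_norm_interp (@cntk_gap R d q) (trainX x) (trainY R) z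
        <-> dotv z (const_mx 1) <= 0)).
Proof.
split=> [z|q _ /min_norm_interp_cntk_gap[]].
  by rewrite min_norm_interp_fc_ntk // pmulr_lge0 // invr_gt0 dotvv_gt0.
rewrite neq_lt => /orP[s_lt0|s_gt0] gE.
- by right=> z; rewrite gE nmulr_lge0 ?invr_lt0.
- by left=> z; rewrite gE pmulr_lge0 ?invr_gt0.
Qed.
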